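(* Let $Q$ be a uniquely $2$-divisible commutative A-loop, and define $x\circ y = \big(x^{-1}\backslash (xy^2)\big)^{1/2}$, where $z^{1/2}$ denotes the unique $w\in Q$ with $w^2=z$. Then $(Q,\circ)$ is a (left) Bruck loop, and powers in $Q$ coincide with powers in $(Q,\circ)$.
   Context: A loop is a set with a binary operation and neutral element $1$ in which all left and right translations are bijections; $\mathrm{Inn}(Q)$ is the stabilizer of $1$ in the group generated by all translations. A commutative A-loop is a commutative loop all of whose inner mappings are automorphisms. $x\backslash y$ is the unique $z$ with $xz=y$, $x^{-1}=x\backslash 1$. A loop is uniquely $2$-divisible if $x\mapsto x^2$ is a bijection. A left Bruck loop is a loop satisfying the left Bol identity $x\circ(y\circ(x\circ z)) = (x\circ(y\circ x))\circ z$ and the automorphic inverse property $(x\circ y)^{-1}=x^{-1}\circ y^{-1}$. Powers are $x^n=1L_x^n$ with $L_x$ the left translation of the respective operation. *)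

From mathcomp Require Import all_boot.
Set Implicit Arguments. Unset Strict Implicit. Unset Printing Implicit Defensive.

Section Loops.
Variable Q : Type.
Implicit Types (mul : Q -> Q -> Q) (e : Q).

Definition is_loop mul e :=
  [/\ forall x, mul e x = x /\ mul x e = x,
      forall x, bijective (mul x) &
      forall x, bijective (fun y => mul y x)].

(* The multiplication group Mlt(Q): the group (of permutations of Q)
   generated by all translations L_x, R_x.  Its elements are the finite
   composites of translations and their inverses; the inverse of L_x is
   given as any g with L_x o g = id (unique since L_x is bijective). *)
Inductive in_mlt mul : (Q -> Q) -> Prop :=
| mlt_id : in_mlt mul (fun y => y)
| mlt_L x f : in_mlt mul f -> in_mlt mul (fun y => mul x (f y))
| mlt_R x f : in_mlt mul f -> in_mlt mul (fun y => mul (f y) x)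
| mlt_Linv x g f : (forall y, mul x (g y) = y) -> in_mlt mul f ->
    in_mlt mul (fun y => g (f y))
| mlt_Rinv x g f : (forall y, mul (g y) x = y) -> in_mlt mul f ->
    in_mlt mul (fun y => g (f y)).

Definition inner_mapping mul e (f : Q -> Q) := in_mlt mul f /\ f e = e.

Definition is_automorphism mul (f : Q -> Q) :=
  bijective f /\ forall x y, f (mul x y) = mul (f x) (f y).

Definition comm_A_loop mul e :=
  [/\ is_loop mul e, commutative mul &
      forall f, inner_mapping mul e f -> is_automorphism mul f].

Definition power mul e (x : Q) (n : nat) : Q := iter n (mul x) e.

Definition uniquely_2_divisible mul e :=
  bijective (fun x => power mul e x 2).

Definition left_Bol (op : Q -> Q -> Q) :=
  forall x y z, op x (op y (op x z)) = op (op x (op y x)) z.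

(* Automorphic inverse property (x o y)^{-1} = x^{-1} o y^{-1}, where
   x^{-1} = x \ e is the unique z with x o z = e. *)
Definition AIP (op : Q -> Q -> Q) e :=
  forall x y xi yi, op x xi = e -> op y yi = e -> op (op x y) (op xi yi) = e.

Definition left_Bruck_loop (op : Q -> Q -> Q) e :=
  [/\ is_loop op e, left_Bol op & AIP op e].

Definition circ mul e (ldiv : Q -> Q -> Q) (sqrt : Q -> Q) (x y : Q) : Q :=
  sqrt (ldiv (ldiv x e) (mul x (power mul e y 2))).

End Loops.

(* Write P x for the permutation L_{x^-1}^-1 L_x.  In a commutative A-loop
   every inner mapping is an automorphism; applied to suitable composites of
   translations this yields the automorphic inverse property, the power
   associativity, and the identity P x (P y (P x z)) = P (P x y) z.  Since
   (x o y)^2 = P x (y^2), the latter is exactly the left Bol identity of o,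
   and x o (y o x) = P x y makes the translations of o bijective. *)
From mathcomp Require Import all_boot.

Section CommALoop.

Set Implicit Arguments.

Variables (Q : Type) (mul : Q -> Q -> Q) (e : Q) (ldiv : Q -> Q -> Q).
Hypotheses (HQ : comm_A_loop mul e)
           (mulq_ldiv : forall x y, mul x (ldiv x y) = y).

Local Notation "x * y" := (mul x y).

Lemma mul1q x : e * x = x.
Proof. by case: HQ => -[/(_ x) []]. Qed.

Lemma mulq1 x : x * e = x.
Proof. by case: HQ => -[/(_ x) []]. Qed.

Lemma mulqC : commutative mul.
Proof. by case: HQ. Qed.

Lemma mulqI x : injective (mul x).
Proof. by case: HQ => -[_ /(_ x) /bij_inj]. Qed.

Lemma ldiv_mulq x y : ldiv x (x * y) = y.
Proof. by apply: (@mulqI x); rewrite mulq_ldiv. Qed.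

Lemma ldivqq x : ldiv x x = e.
Proof. by have := ldiv_mulq x e; rewrite mulq1. Qed.

Lemma ldiv1q x : ldiv e x = x.
Proof. by have := ldiv_mulq e x; rewrite mul1q. Qed.

Lemma innerM f : inner_mapping mul e f -> {morph f : a b / a * b}.
Proof. by case: HQ => _ _ /[apply] -[]. Qed.

Definition invq x := ldiv x e.
Local Notation "x ^-1" := (invq x).

Lemma mulqV x : x * x^-1 = e.
Proof. exact: mulq_ldiv. Qed.

Lemma mulVq x : x^-1 * x = e.
Proof. by rewrite mulqC mulqV. Qed.

Lemma invqK x : x^-1^-1 = x.
Proof. by apply: (@mulqI x^-1); rewrite mulqV mulVq. Qed.

Lemma invq1 : e^-1 = e.
Proof. exact: ldivqq. Qed.

Lemma innerV f : inner_mapping mul e f -> {morph f : a / a^-1}.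
Proof.
move=> f_inner a; apply: (@mulqI (f a)).
by rewrite mulqV -innerM // mulqV; case: f_inner.
Qed.

Lemma invqM x y : (x * y)^-1 = x^-1 * y^-1.
Proof.
(* phi = L_p^-1 L_u L_{y^-1} is inner and sends x to p, so applying it to
   x x^-1 = e gives u (y^-1 x^-1) = e. *)
set u := x * y; set p := u * y^-1.
pose phi t := ldiv p (u * (y^-1 * t)).
have phi_inner : inner_mapping mul e phi.
  split; last by rewrite /phi mulq1 ldivqq.
  exact: mlt_Linv (mulq_ldiv p) (mlt_L u (mlt_L y^-1 (mlt_id mul))).
have phiM := innerM phi_inner.
have phix : phi x = p.
  have phiy : phi y = ldiv p u by rewrite /phi mulVq mulq1.
  have phiyx : phi (y * x) = u.
    by rewrite /phi [y * x]mulqC -/u [y^-1 * u]mulqC -/p [u * p]mulqC ldiv_mulq.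
  by apply: (@mulqI (phi y)); rewrite -phiM phiyx phiy mulqC mulq_ldiv.
apply: (@mulqI u); rewrite mulqV (mulqC x^-1).
have := phiM x x^-1; rewrite mulqV phix /phi mulq_ldiv => <-.
by case: phi_inner.
Qed.

Lemma invq_ldiv a b : (ldiv a b)^-1 = ldiv a^-1 b^-1.
Proof. by have := invqM a (ldiv a b); rewrite mulq_ldiv => ->; rewrite ldiv_mulq. Qed.

Lemma inner_LVL x : inner_mapping mul e (fun t => x^-1 * (x * t)).
Proof.
split; last by rewrite mulq1 mulVq.
exact: mlt_L _ (mlt_L x (mlt_id mul)).
Qed.

Lemma mulq_LV_comm x z : x * (x^-1 * z) = x^-1 * (x * z).
Proof.
apply: (@mulqI x^-1).
have /= -> := innerM (inner_LVL x) x^-1 z.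
by rewrite mulqV mulq1.
Qed.

Lemma mulVqq x : x^-1 * (x * x) = x.
Proof.
have /= := innerV (inner_LVL x) x^-1.
by rewrite invqK mulqV mulq1 invqK.
Qed.

Definition P x w := ldiv x^-1 (x * w).

Lemma P_bij x : bijective (P x).
Proof.
by exists (fun w => ldiv x (x^-1 * w)) => w; rewrite /P mulq_ldiv ldiv_mulq.
Qed.

Lemma Pq1 x : P x e = x * x.
Proof. by have := ldiv_mulq x^-1 (x * x); rewrite mulVqq /P mulq1. Qed.

Lemma P_invq x w : P x^-1 w^-1 = (P x w)^-1.
Proof. by rewrite /P invq_ldiv invqM. Qed.

Lemma PE x w : P x w = x * (ldiv x w^-1)^-1.
Proof.
rewrite invq_ldiv !invqK; apply: (@mulqI x^-1).
by rewrite mulq_ldiv -mulq_LV_comm mulq_ldiv.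
Qed.

Lemma P_invqP x z : P x (P x z)^-1 = z^-1.
Proof. by rewrite PE invqK [in ldiv x _]PE ldiv_mulq invqK mulq_ldiv. Qed.

Lemma P_left_Bol x y z : P x (P y (P x z)) = P (P x y) z.
Proof.
(* h = L_w^-1 P_x L_y is inner; combine with PE for P y. *)
set w := P x y.
pose h t := ldiv w (P x (y * t)).
have h_inner : inner_mapping mul e h.
  split; last by rewrite /h mulq1 ldivqq.
  exact: mlt_Linv (mulq_ldiv w)
    (mlt_Linv (mulq_ldiv x^-1) (mlt_L x (mlt_L y (mlt_id mul)))).
have Px_y t : P x (y * t) = w * h t by rewrite /h mulq_ldiv.
rewrite [P y _]PE Px_y (innerV h_inner) /h mulq_ldiv P_invqP.
by rewrite [RHS]PE.
Qed.

Local Notation "x ^+ n" := (power mul e x n).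

Lemma power_inner f x n :
  inner_mapping mul e f -> f x = x -> f (x ^+ n) = x ^+ n.
Proof.
move=> f_inner fx; elim: n => [|n IHn] /=; first by case: f_inner.
by rewrite innerM // fx IHn.
Qed.

Lemma powerD x m n : x ^+ m * x ^+ n = x ^+ (m + n).
Proof.
elim: m n => [|m IHm] n; first exact: mul1q.
set q := x ^+ m.
(* phi = L_{x q}^-1 L_x L_q is inner and fixes x, hence all its powers. *)
pose phi t := ldiv (x * q) (x * (q * t)).
have phi_inner : inner_mapping mul e phi.
  split; last by rewrite /phi mulq1 ldivqq.
  exact: mlt_Linv (mulq_ldiv (x * q)) (mlt_L x (mlt_L q (mlt_id mul))).
have qx : q * x = x * q by have := IHm 1; rewrite /= mulq1 addn1.
have phix : phi x = x by rewrite /phi qx [x * (x * q)]mulqC ldiv_mulq.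
have := power_inner n phi_inner phix.
by rewrite /phi -/q IHm => <-; rewrite mulq_ldiv.
Qed.

Lemma mulV_powerS x n : x^-1 * x ^+ n.+1 = x ^+ n.
Proof. exact: power_inner (inner_LVL x) (mulVqq x). Qed.

Variable sqrt : Q -> Q.
Hypotheses (Q_2div : uniquely_2_divisible mul e)
           (sqrt_power2 : forall z, (sqrt z) ^+ 2 = z).

Lemma mul_sqrtq z : sqrt z * sqrt z = z.
Proof. by have := sqrt_power2 z; rewrite /= mulq1. Qed.

Lemma sqrt_mulqq y : sqrt (y * y) = y.
Proof. by apply: (bij_inj Q_2div); rewrite /= !mulq1 mul_sqrtq. Qed.

Lemma sqrt_invq z : sqrt z^-1 = (sqrt z)^-1.
Proof. by rewrite -{1}(mul_sqrtq z) invqM sqrt_mulqq. Qed.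

Lemma sqrt_inj : injective sqrt.
Proof. by move=> a b eq_ab; rewrite -(mul_sqrtq a) eq_ab mul_sqrtq. Qed.

Local Notation circ := (circ mul e ldiv sqrt).

Lemma circE x y : circ x y = sqrt (P x (y * y)).
Proof. by rewrite /circ /= mulq1. Qed.

Lemma circ_circ x y : circ x (circ y x) = P x y.
Proof. by rewrite !circE mul_sqrtq -Pq1 P_left_Bol Pq1 sqrt_mulqq. Qed.

Lemma circ_inj x : injective (circ x).
Proof.
move=> a b; rewrite !circE => /sqrt_inj /(bij_inj (P_bij x)) eq_sq.
by rewrite -(sqrt_mulqq a) eq_sq sqrt_mulqq.
Qed.

Lemma circ_invq x : circ x x^-1 = e.
Proof. by rewrite circE -invqM -Pq1 P_invqP invq1 -{2}(sqrt_mulqq e) mulq1. Qed.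

Lemma circ_invqM x y : circ x^-1 y^-1 = (circ x y)^-1.
Proof. by rewrite !circE -invqM P_invq sqrt_invq. Qed.

Lemma circ_loop : is_loop circ e.
Proof.
split=> [x | x | a].
- by rewrite !circE mul1q Pq1 /P invq1 ldiv1q mul1q sqrt_mulqq.
- have [Pinv PK PinvK] := P_bij x.
  exists (fun z => sqrt (Pinv (z * z))) => z; rewrite circE mul_sqrtq.
    by rewrite PK sqrt_mulqq.
  by rewrite PinvK sqrt_mulqq.
- have [Pinv PK PinvK] := P_bij a.
  exists (fun b => Pinv (circ a b)) => y; first by rewrite circ_circ PK.
  by apply: (@circ_inj a); rewrite circ_circ PinvK.
Qed.

Lemma circ_left_Bol : left_Bol circ.
Proof. by move=> x y z; rewrite circ_circ !circE !mul_sqrtq P_left_Bol. Qed.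

Lemma circ_AIP : AIP circ e.
Proof.
have circ_inv x xi : circ x xi = e -> xi = x^-1.
  by move=> xxi; apply: (@circ_inj x); rewrite xxi circ_invq.
move=> x y xi yi /circ_inv -> /circ_inv ->.
by rewrite circ_invqM circ_invq.
Qed.

Lemma power_circ x n : power circ e x n = x ^+ n.
Proof.
elim: n => [|n IHn] //=; rewrite IHn circE powerD /P.
rewrite -[x * x ^+ (n + n)]/(x ^+ (n + n).+1) -(mulV_powerS x (n + n).+1).
by rewrite ldiv_mulq -addSn -addnS -powerD sqrt_mulqq.
Qed.

End CommALoop.

Theorem lemma3p5 (Q : Type) (mul : Q -> Q -> Q) (e : Q)
    (ldiv : Q -> Q -> Q) (sqrt : Q -> Q) :
  comm_A_loop mul e ->
  uniquely_2_divisible mul e ->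
  (forall x y, mul x (ldiv x y) = y) ->
  (forall z, power mul e (sqrt z) 2 = z) ->
  left_Bruck_loop (circ mul e ldiv sqrt) e /\
  (forall (x : Q) (n : nat),
      power (circ mul e ldiv sqrt) e x n = power mul e x n).
Proof.
move=> HQ Q_2div mulq_ldiv sqrt_power2.
split; first split.
- exact: circ_loop.
- exact: circ_left_Bol.
- exact: circ_AIP.
- exact: power_circ.
Qed.
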